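(* Assume the standing assumptions in the context. Let $v=(v_1,v_2)$ be the bounded constrained viscosity solution on $[\underline{x},+\infty)$ of the system $$\rho v_j(x)=H(x,y_j,Dv_j(x))+\lambda_j\big(v_{\bar\jmath}(x)-v_j(x)\big),\qquad j=1,2,\ \bar\jmath=3-j,$$ and assume each $v_j$ is concave. Then $v_j$ is $C^1$ on $(\underline{x},+\infty)$. In particular, defining $Dv_j(\underline{x})=\lim_{\epsilon\to0^+}\frac{v_j(\underline{x}+\epsilon)-v_j(\underline{x})}{\epsilon}$, the function $Dv_j$ is uniformly continuous on $[\underline{x},R]$ for every constant $R>\underline{x}$.
   Context: Standing assumptions: $\rho>0$; $-\infty<r<\rho$; $0<y_1<y_2$; $\gamma>1$; $\underline{x}\le0$ with $\rho\underline{x}+y_j>0$ for $j=1,2$; $\lambda_1,\lambda_2\ge0$ constants. Utility $u(c)=\frac{c^{1-\gamma}}{1-\gamma}$; Hamiltonian $H(x,y_j,p)=\sup_{c\ge0}\{u(c)+(rx+y_j-c)p\}$, equal to $(rx+y_j)p+\frac{\gamma}{1-\gamma}p^{1-1/\gamma}$ for $p\ge0$ and $+\infty$ for $p<0$. Viscosity subsolution on $S\subseteq[\underline{x},\infty)$: u.s.c. pair $v$ such that whenever $\varphi$ smooth, $j\in\{1,2\}$, and $v_j-\varphi$ has a local max (relative to $[\underline{x},\infty)$) at $x_0\in S$, then $\rho v_j(x_0)\le H(x_0,y_j,D\varphi(x_0))+\lambda_j(v_{\bar\jmath}(x_0)-v_j(x_0))$. Viscosity supersolution on $S$: l.s.c.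 pair with the reverse inequality at local minima $x_0\in S$. A constrained viscosity solution is a continuous pair that is a viscosity supersolution on $(\underline{x},\infty)$ and a viscosity subsolution on $[\underline{x},\infty)$. *)

From Stdlib Require Import Reals Lra.
From Coquelicot Require Import Coquelicot.
Open Scope R_scope.

(* p^a for p >= 0 with the convention 0^a = 0 (used only with a = 1 - 1/gamma > 0). *)
Definition powp (p a : R) : R :=
  if Rlt_dec 0 p then Rpower p a else 0.

(* Hamiltonian H(x,y,p) = sup_{c>=0} { u(c) + (r x + y - c) p } with
   u(c) = c^(1-gamma)/(1-gamma): it equals (r x + y) p + gamma/(1-gamma) p^(1-1/gamma)
   for p >= 0 and +infinity for p < 0. *)
Definition Ham (r gamma x y p : R) : Rbar :=
  if Rlt_dec p 0 then p_infty
  else Finite ((r * x + y) * p + gamma / (1 - gamma) * powp p (1 - 1 / gamma)).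

Definition smooth (phi : R -> R) : Prop :=
  forall (n : nat) (x : R), ex_derive (Derive_n phi n) x.

Definition loc_max_rel (xl : R) (w phi : R -> R) (x0 : R) : Prop :=
  exists delta : R, 0 < delta /\
    forall x, xl <= x -> Rabs (x - x0) < delta -> w x - phi x <= w x0 - phi x0.

Definition loc_min_rel (xl : R) (w phi : R -> R) (x0 : R) : Prop :=
  exists delta : R, 0 < delta /\
    forall x, xl <= x -> Rabs (x - x0) < delta -> w x0 - phi x0 <= w x - phi x.

(* Viscosity subsolution inequality for component w = v_j (with wbar = v_{jbar},
   income y = y_j, intensity lam = lambda_j) on the set S. *)
Definition visc_sub_j (rho r gamma xl y lam : R) (S : R -> Prop) (w wbar : R -> R) : Prop :=
  forall (phi : R -> R) (x0 : R), smooth phi -> S x0 -> loc_max_rel xl w phi x0 ->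
    Rbar_le (Finite (rho * w x0))
            (Rbar_plus (Ham r gamma x0 y (Derive phi x0)) (Finite (lam * (wbar x0 - w x0)))).

Definition visc_super_j (rho r gamma xl y lam : R) (S : R -> Prop) (w wbar : R -> R) : Prop :=
  forall (phi : R -> R) (x0 : R), smooth phi -> S x0 -> loc_min_rel xl w phi x0 ->
    Rbar_le (Rbar_plus (Ham r gamma x0 y (Derive phi x0)) (Finite (lam * (wbar x0 - w x0))))
            (Finite (rho * w x0)).

Definition usc_on (xl : R) (w : R -> R) : Prop :=
  forall x0, xl <= x0 -> forall eps, 0 < eps -> exists delta, 0 < delta /\
    forall x, xl <= x -> Rabs (x - x0) < delta -> w x < w x0 + eps.

Definition lsc_on (xl : R) (w : R -> R) : Prop :=
  forall x0, xl <= x0 -> forall eps, 0 < eps -> exists delta, 0 < delta /\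
    forall x, xl <= x -> Rabs (x - x0) < delta -> w x0 - eps < w x.

Definition cont_on (xl : R) (w : R -> R) : Prop :=
  forall x0, xl <= x0 -> forall eps, 0 < eps -> exists delta, 0 < delta /\
    forall x, xl <= x -> Rabs (x - x0) < delta -> Rabs (w x - w x0) < eps.

Definition visc_sub (rho r gamma xl y1 y2 lam1 lam2 : R) (S : R -> Prop) (v1 v2 : R -> R) : Prop :=
  usc_on xl v1 /\ usc_on xl v2 /\
  visc_sub_j rho r gamma xl y1 lam1 S v1 v2 /\ visc_sub_j rho r gamma xl y2 lam2 S v2 v1.

Definition visc_super (rho r gamma xl y1 y2 lam1 lam2 : R) (S : R -> Prop) (v1 v2 : R -> R) : Prop :=
  lsc_on xl v1 /\ lsc_on xl v2 /\
  visc_super_j rho r gamma xl y1 lam1 S v1 v2 /\ visc_super_j rho r gamma xl y2 lam2 S v2 v1.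

Definition constrained_visc_sol (rho r gamma xl y1 y2 lam1 lam2 : R) (v1 v2 : R -> R) : Prop :=
  cont_on xl v1 /\ cont_on xl v2 /\
  visc_super rho r gamma xl y1 y2 lam1 lam2 (fun x => xl < x) v1 v2 /\
  visc_sub rho r gamma xl y1 y2 lam1 lam2 (fun x => xl <= x) v1 v2.

Definition bounded_on (xl : R) (w : R -> R) : Prop :=
  exists M : R, forall x, xl <= x -> Rabs (w x) <= M.

Definition concave_on (xl : R) (w : R -> R) : Prop :=
  forall a b t, xl <= a -> xl <= b -> 0 <= t <= 1 ->
    t * w a + (1 - t) * w b <= w (t * a + (1 - t) * b).

Definition C1_conclusion (xl : R) (w : R -> R) : Prop :=
  exists d : R -> R,
    (forall x, xl < x -> is_derive w x (d x)) /\
    (forall x, xl < x -> continuous d x) /\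
    filterlim (fun e => (w (xl + e) - w xl) / e) (at_right 0) (locally (d xl)) /\
    (forall Rb, xl < Rb -> forall eps, 0 < eps -> exists delta, 0 < delta /\
       forall a b, xl <= a <= Rb -> xl <= b <= Rb -> Rabs (a - b) < delta ->
         Rabs (d a - d b) < eps).

(* A concave [w] has one-sided derivatives [D+ w <= D- w] at interior points, and it is
   C^1 up to the endpoint as soon as they agree and the right slopes at [xl] are bounded:
   the antitone derivative is then squeezed between difference quotients, which are
   continuous.  Both facts come from the equation.  Near [x0], [w] can be touched from
   below by parabolas at points arbitrarily close to [x0] with slopes arbitrarily close
   to [D+ w x0] (or, after reflection, [D- w x0]); the supersolution inequality and
   continuity give [F x0 p <= 0] for both one-sided derivatives [p], where
   [F x p = H(x, y, p) + lam (wbar x - w x) - rho w x].  If [D+ w x0 < D- w x0], the line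
   through [(x0, w x0)] with the midpoint slope touches [w] from above, and the
   subsolution inequality [F >= 0] there contradicts the strict convexity of [H] in [p].
   Near [xl], [F <= 0] at slopes close to [D+ w] bounds these slopes, because
   [(r x + y) p] grows linearly with [r xl + y > 0] while [p^(1 - 1/gamma)] is sublinear. *)

From Stdlib Require Import Reals Lra Classical.
From Coquelicot Require Import Coquelicot.
Open Scope R_scope.

Lemma continuity_pt_eps (f : R -> R) (x : R) :
  continuity_pt f x <->
  forall eps, 0 < eps -> exists d, 0 < d /\ forall y, Rabs (y - x) < d -> Rabs (f y - f x) < eps.
Proof.
  rewrite continuity_pt_locally. split.
  - intros H eps Heps. destruct (H (mkposreal eps Heps)) as [d Hd].
    exists d. split; [apply cond_pos | exact Hd].
  - intros H eps. destruct (H eps (cond_pos eps)) as [d [Hd Hy]].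
    exists (mkposreal d Hd). exact Hy.
Qed.

Lemma continuity_pt_le_right_end (f : R -> R) (a h M : R) :
  continuity_pt f a -> 0 < h -> (forall t, a < t < a + h -> f t <= M) -> f a <= M.
Proof.
  intros Hf Hh Hle. apply Rnot_lt_le. intros Hlt.
  destruct (proj1 (continuity_pt_eps f a) Hf (f a - M) ltac:(lra)) as [d [Hd Hnear]].
  set (t := a + Rmin d h / 2).
  assert (Ht : a < t < a + h /\ Rabs (t - a) < d).
  { unfold t. rewrite Rabs_right; unfold Rmin; destruct Rle_dec; lra. }
  specialize (Hnear t (proj2 Ht)). apply Rabs_def2 in Hnear.
  specialize (Hle t (proj1 Ht)). lra.
Qed.

Definition quad (a b c x : R) : R := a + b * x + c * (x * x).

Lemma is_derive_quad a b c x : is_derive (quad a b c) x (b + 2 * c * x).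
Proof. unfold quad. auto_derive; auto. ring. Qed.

Lemma Derive_quad a b c x : Derive (quad a b c) x = b + 2 * c * x.
Proof. apply is_derive_unique, is_derive_quad. Qed.

Lemma continuity_pt_quad a b c x : continuity_pt (quad a b c) x.
Proof.
  apply derivable_continuous_pt. exists (b + 2 * c * x).
  apply is_derive_Reals, is_derive_quad.
Qed.

Lemma smooth_quad a b c : smooth (quad a b c).
Proof.
  assert (Hn : forall n, exists a' b' c', forall x, Derive_n (quad a b c) n x = quad a' b' c' x).
  { induction n as [|n [a' [b' [c' E]]]].
    - exists a, b, c. reflexivity.
    - exists b', (2 * c'), 0. intros x. simpl.
      rewrite (Derive_ext _ _ x E), Derive_quad. unfold quad. ring. }
  intros n x. destruct (Hn n) as [a' [b' [c' E]]].
  apply ex_derive_ext with (f := quad a' b' c').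
  - intros t. symmetry. apply E.
  - eexists. apply is_derive_quad.
Qed.

Lemma quad_reflect b c x0 x :
  quad 0 b c (2 * x0 - x) = quad (2 * b * x0 + 4 * c * x0 * x0) (- (b + 4 * c * x0)) c x.
Proof. unfold quad. ring. Qed.

Lemma Rlt_Rpower_l_neg a b c : c < 0 -> 0 < a < b -> Rpower b c < Rpower a c.
Proof.
  intros Hc Hab. unfold Rpower. apply exp_increasing.
  pose proof (ln_increasing a b (proj1 Hab) (proj2 Hab)). nra.
Qed.

Lemma powp_pos p e : 0 < p -> powp p e = Rpower p e.
Proof. intros Hp. unfold powp. destruct (Rlt_dec 0 p); [reflexivity | lra]. Qed.

Lemma powp_nonpos p e : p <= 0 -> powp p e = 0.
Proof. intros Hp. unfold powp. destruct (Rlt_dec 0 p); [lra | reflexivity]. Qed.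

Lemma continuity_pt_powp e q : 0 < e -> continuity_pt (fun p => powp p e) q.
Proof.
  intros He. destruct (Rtotal_order q 0) as [Hq | [-> | Hq]].
  - apply continuity_pt_locally_ext with (f := fun _ => 0) (a := - q); [lra | |].
    + intros p Hp. unfold Rdist in Hp. apply Rabs_def2 in Hp.
      rewrite powp_nonpos by lra. reflexivity.
    + apply continuity_pt_const. intros u v. reflexivity.
  - apply continuity_pt_eps. intros eps Heps.
    exists (Rpower eps (1 / e)). split; [apply exp_pos |].
    intros p Hp. rewrite (powp_nonpos 0) by lra. rewrite Rminus_0_r in *.
    destruct (Rle_lt_dec p 0) as [Hp0 | Hp0].
    + rewrite powp_nonpos, Rabs_R0 by lra. exact Heps.
    + rewrite powp_pos, Rabs_right by (try apply Rle_ge, Rlt_le, exp_pos; lra).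
      rewrite Rabs_right in Hp by lra.
      apply (Rlt_le_trans _ (Rpower (Rpower eps (1 / e)) e)); [apply Rlt_Rpower_l; lra |].
      rewrite Rpower_mult. replace (1 / e * e) with 1 by (field; lra).
      rewrite Rpower_1; lra.
  - apply continuity_pt_locally_ext with (f := fun p => Rpower p e) (a := q); [lra | |].
    + intros p Hp. unfold Rdist in Hp. apply Rabs_def2 in Hp.
      rewrite powp_pos by lra. reflexivity.
    + apply derivable_continuous_pt. exists (e * Rpower q (e - 1)).
      apply derivable_pt_lim_power. exact Hq.
Qed.

Lemma powp_midpoint_lt A B e : 0 <= A -> A < B -> 0 < e < 1 ->
  powp A e + powp B e < 2 * powp ((A + B) / 2) e.
Proof.
  intros HA HAB He. set (m := (A + B) / 2).
  rewrite (powp_pos B), (powp_pos m) by (unfold m; lra).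
  destruct (Rle_lt_or_eq_dec 0 A HA) as [HA0 | <-].
  - rewrite powp_pos by lra.
    set (df := fun t => e * Rpower t (e - 1)).
    assert (Hd : forall t, A <= t <= B -> derivable_pt_lim (fun t => Rpower t e) t (df t)).
    { intros t Ht. apply derivable_pt_lim_power. lra. }
    destruct (MVT_cor2 (fun t => Rpower t e) df A m) as [c1 [E1 Hc1]].
    { unfold m; lra. }
    { intros t Ht. apply Hd. unfold m in Ht; lra. }
    destruct (MVT_cor2 (fun t => Rpower t e) df m B) as [c2 [E2 Hc2]].
    { unfold m; lra. }
    { intros t Ht. apply Hd. unfold m in Ht; lra. }
    assert (Hdf : df c2 < df c1).
    { unfold df. apply Rmult_lt_compat_l; [lra |]. apply Rlt_Rpower_l_neg; lra. }
    assert (m - A = B - m) by (unfold m; field).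
    assert (0 < m - A) by (unfold m; lra).
    simpl in E1, E2. nra.
  - rewrite powp_nonpos by lra.
    replace m with (B * / 2) by (unfold m; field).
    rewrite <- Rpower_mult_distr by lra.
    assert (Hhalf : / 2 < Rpower (/ 2) e).
    { unfold Rpower. rewrite <- (exp_ln (/ 2)) at 1 by lra. apply exp_increasing.
      assert (ln (/ 2) < 0) by (rewrite <- ln_1; apply ln_increasing; lra). nra. }
    pose proof (exp_pos (e * ln B)). unfold Rpower in *. nra.
Qed.

Lemma linear_minus_powp_sublevel_bounded m0 kap C e : 0 < m0 -> 0 <= kap -> 0 < e < 1 ->
  exists Qb, forall q, 0 <= q -> m0 * q - kap * powp q e <= C -> q <= Qb.
Proof.
  intros Hm Hk He.
  set (beta := m0 / (2 * (kap + 1))).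
  assert (Hb : 0 < beta) by (unfold beta; apply Rdiv_lt_0_compat; lra).
  assert (Hkb : kap * beta <= m0 / 2).
  { unfold beta. apply Rmult_le_reg_r with (2 * (kap + 1)); [lra |].
    unfold Rdiv. field_simplify; [nra | lra]. }
  set (T := Rpower beta (1 / (e - 1))).
  assert (HT : Rpower T (e - 1) = beta).
  { unfold T. rewrite Rpower_mult.
    replace (1 / (e - 1) * (e - 1)) with 1 by (field; lra). apply Rpower_1, Hb. }
  exists (Rmax T (2 * C / m0)). intros q Hq HC.
  destruct (Rle_dec q T) as [HqT | HqT]; [apply (Rle_trans _ T); [exact HqT | apply Rmax_l] |].
  assert (HT0 : 0 < T) by apply exp_pos.
  (* beyond [T], [kap * q^e = kap * q^(e-1) * q <= m0 * q / 2] *)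
  assert (Hpq : Rpower q (e - 1) <= beta).
  { rewrite <- HT. left. apply Rlt_Rpower_l_neg; lra. }
  rewrite powp_pos in HC by lra.
  replace (Rpower q e) with (q * Rpower q (e - 1)) in HC
    by (rewrite <- (Rpower_1 q) at 1 by lra; rewrite <- Rpower_plus; f_equal; ring).
  assert (kap * (q * Rpower q (e - 1)) <= kap * (q * beta)).
  { apply Rmult_le_compat_l; [lra |]. apply Rmult_le_compat_l; lra. }
  apply (Rle_trans _ (2 * C / m0)); [| apply Rmax_r].
  apply Rmult_le_reg_r with (m0 / 2); [lra |].
  replace (2 * C / m0 * (m0 / 2)) with C by (field; lra). nra.
Qed.

Definition slope (w : R -> R) (a b : R) : R := (w b - w a) / (b - a).

Lemma slope_le_iff w a b M : a < b -> slope w a b <= M <-> w b - w a <= M * (b - a).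
Proof. intros Hab. apply Rle_div_l. lra. Qed.

Lemma le_slope_iff w a b M : a < b -> M <= slope w a b <-> M * (b - a) <= w b - w a.
Proof. intros Hab. symmetry. apply Rle_div_r. lra. Qed.

Lemma lt_slope_iff w a b M : a < b -> M < slope w a b <-> M * (b - a) < w b - w a.
Proof. intros Hab. symmetry. apply Rlt_div_r. lra. Qed.

Lemma slope_reflect (w : R -> R) x0 s : 0 < s ->
  slope (fun t => w (2 * x0 - t)) x0 (x0 + s) = - slope w (x0 - s) x0.
Proof.
  intros Hs. unfold slope.
  replace (2 * x0 - (x0 + s)) with (x0 - s) by ring. replace (2 * x0 - x0) with x0 by ring.
  field. lra.
Qed.

Definition ext_left (xl : R) (w : R -> R) (x : R) : R := w (Rmax x xl).

Lemma ext_left_eq xl w x : xl <= x -> ext_left xl w x = w x.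
Proof. intros Hx. unfold ext_left. rewrite Rmax_left; auto. Qed.

Lemma slope_ext_left xl w a b : xl <= a -> xl <= b -> slope (ext_left xl w) a b = slope w a b.
Proof. intros Ha Hb. unfold slope. rewrite !ext_left_eq; auto. Qed.

Lemma continuity_pt_ext_left xl w : cont_on xl w -> forall t, continuity_pt (ext_left xl w) t.
Proof.
  intros Hc t. apply continuity_pt_eps. intros eps Heps.
  destruct (Hc (Rmax t xl) (Rmax_r _ _) eps Heps) as [d [Hd Hnear]].
  exists d. split; [exact Hd |]. intros z Hz. apply Hnear; [apply Rmax_r |].
  apply (Rle_lt_trans _ (Rabs (z - t))); [| exact Hz].
  unfold Rmax. repeat destruct Rle_dec; unfold Rabs; repeat destruct Rcase_abs; lra.
Qed.

Lemma continuity_pt_slope_ext_left_end xl w b x : cont_on xl w -> x <> b ->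
  continuity_pt (fun z => slope (ext_left xl w) z b) x.
Proof.
  intros Hc Hx. unfold slope. apply continuity_pt_div.
  - apply continuity_pt_minus; [apply continuity_pt_const; intros ? ?; reflexivity |].
    apply continuity_pt_ext_left, Hc.
  - apply continuity_pt_minus; [apply continuity_pt_const; intros ? ?; reflexivity |].
    apply continuity_pt_id.
  - intros E. apply Hx. lra.
Qed.

Lemma continuity_pt_slope_ext_right_end xl w a x : cont_on xl w -> x <> a ->
  continuity_pt (fun z => slope (ext_left xl w) a z) x.
Proof.
  intros Hc Hx. unfold slope. apply continuity_pt_div.
  - apply continuity_pt_minus; [| apply continuity_pt_const; intros ? ?; reflexivity].
    apply continuity_pt_ext_left, Hc.
  - apply continuity_pt_minus; [apply continuity_pt_id |].
    apply continuity_pt_const. intros ? ?. reflexivity.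
  - intros E. apply Hx. lra.
Qed.

Lemma Lub_Rbar_real (E : R -> Prop) (e0 M : R) : E e0 -> (forall z, E z -> z <= M) ->
  (forall z, E z -> z <= real (Lub_Rbar E)) /\
  (forall b, (forall z, E z -> z <= b) -> real (Lub_Rbar E) <= b).
Proof.
  intros He HM. destruct (Lub_Rbar_correct E) as [Hub Hleast].
  destruct (Lub_Rbar E) as [l | |].
  - split; [exact Hub |]. intros b Hb. apply (Hleast (Finite b)). exact Hb.
  - exfalso. apply (Hleast (Finite M)). exact HM.
  - exfalso. exact (Hub e0 He).
Qed.

Lemma Glb_Rbar_real (E : R -> Prop) (e0 M : R) : E e0 -> (forall z, E z -> M <= z) ->
  (forall z, E z -> real (Glb_Rbar E) <= z) /\
  (forall b, (forall z, E z -> b <= z) -> b <= real (Glb_Rbar E)).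
Proof.
  intros He HM. destruct (Glb_Rbar_correct E) as [Hlb Hgreatest].
  destruct (Glb_Rbar E) as [l | |].
  - split; [exact Hlb |]. intros b Hb. apply (Hgreatest (Finite b)). exact Hb.
  - exfalso. exact (Hlb e0 He).
  - exfalso. apply (Hgreatest (Finite M)). exact HM.
Qed.

Definition right_slopes (w : R -> R) (x : R) (z : R) : Prop :=
  exists s, 0 < s /\ z = slope w x (x + s).

Definition left_slopes (xl : R) (w : R -> R) (x : R) (z : R) : Prop :=
  exists s, 0 < s <= x - xl /\ z = slope w (x - s) x.

(* [real] maps an infinite supremum to the junk value [0]; the specifications below
   assume bounded right slopes. *)
Definition rderiv (w : R -> R) (x : R) : R := real (Lub_Rbar (right_slopes w x)).

Definition lderiv (xl : R) (w : R -> R) (x : R) : R := real (Glb_Rbar (left_slopes xl w x)).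

Definition right_slopes_bounded (w : R -> R) (x : R) : Prop :=
  exists M, forall s, 0 < s -> slope w x (x + s) <= M.

Section Concave.

Variables (xl : R) (w : R -> R).
Hypothesis Hconc : concave_on xl w.

Lemma concave_three_points a b c : xl <= a -> a < b < c ->
  (c - b) * w a + (b - a) * w c <= (c - a) * w b.
Proof.
  intros Ha Habc. set (t := (c - b) / (c - a)).
  assert (Ht : 0 <= t <= 1).
  { unfold t. split.
    - apply Rdiv_le_0_compat; lra.
    - apply Rle_div_l; lra. }
  pose proof (Hconc a c t Ha ltac:(lra) Ht) as H.
  replace (t * a + (1 - t) * c) with b in H by (unfold t; field; lra).
  apply Rmult_le_compat_r with (r := c - a) in H; [| lra].
  replace ((t * w a + (1 - t) * w c) * (c - a)) with ((c - b) * w a + (b - a) * w c) in H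
    by (unfold t; field; lra).
  lra.
Qed.

Lemma slope_antitone_right_end a b c : xl <= a -> a < b < c -> slope w a c <= slope w a b.
Proof.
  intros Ha Habc. pose proof (concave_three_points a b c Ha Habc).
  apply slope_le_iff; [lra |]. unfold slope.
  apply (Rmult_le_reg_r (b - a)); [lra |].
  replace ((w b - w a) / (b - a) * (c - a) * (b - a)) with ((w b - w a) * (c - a)) by (field; lra).
  nra.
Qed.

Lemma slope_antitone_left_end a b c : xl <= a -> a < b < c -> slope w b c <= slope w a c.
Proof.
  intros Ha Habc. pose proof (concave_three_points a b c Ha Habc).
  apply slope_le_iff; [lra |]. unfold slope.
  apply (Rmult_le_reg_r (c - a)); [lra |].
  replace ((w c - w a) / (c - a) * (c - b) * (c - a)) with ((w c - w a) * (c - b)) by (field; lra).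
  nra.
Qed.

Lemma slope_antitone a b c d : xl <= a -> a < b -> b <= c -> c < d ->
  slope w c d <= slope w a b.
Proof.
  intros Ha Hab Hbc Hcd.
  assert (Habd : slope w b d <= slope w a b).
  { apply (Rle_trans _ (slope w a d)).
    - apply slope_antitone_left_end; lra.
    - apply slope_antitone_right_end; lra. }
  destruct (Rle_lt_or_eq_dec b c Hbc) as [Hlt | <-]; [| exact Habd].
  apply (Rle_trans _ (slope w b d)); [apply slope_antitone_left_end | exact Habd]; lra.
Qed.

Lemma right_slopes_bounded_interior x : xl < x -> right_slopes_bounded w x.
Proof.
  intros Hx. exists (slope w xl x). intros s Hs. apply slope_antitone; lra.
Qed.

Lemma rderiv_spec x : xl <= x -> right_slopes_bounded w x ->
  (forall s, 0 < s -> slope w x (x + s) <= rderiv w x) /\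
  (forall eta, 0 < eta -> exists d, 0 < d /\
     forall s, 0 < s <= d -> rderiv w x - eta < slope w x (x + s)).
Proof.
  intros Hx [M HM].
  destruct (Lub_Rbar_real (right_slopes w x) (slope w x (x + 1)) M) as [Hub Hleast].
  { exists 1. split; [lra | reflexivity]. }
  { intros z [s [Hs ->]]. apply HM, Hs. }
  fold (rderiv w x) in Hub, Hleast. split.
  - intros s Hs. apply Hub. exists s. split; [exact Hs | reflexivity].
  - intros eta Heta.
    destruct (classic (exists d, 0 < d /\ rderiv w x - eta < slope w x (x + d)))
      as [[d [Hd Hlt]] | Hnone].
    + exists d. split; [exact Hd |]. intros s [Hs Hsd].
      destruct (Rle_lt_or_eq_dec s d Hsd) as [Hlt' | ->]; [| exact Hlt].
      apply (Rlt_le_trans _ _ _ Hlt). apply slope_antitone_right_end; lra.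
    + exfalso. assert (rderiv w x <= rderiv w x - eta) by
        (apply Hleast; intros z [s [Hs ->]]; apply Rnot_lt_le; intros Hlt; apply Hnone; eauto).
      lra.
Qed.

Lemma lderiv_spec x : xl < x ->
  (forall s, 0 < s <= x - xl -> lderiv xl w x <= slope w (x - s) x) /\
  (forall eta, 0 < eta -> exists d, 0 < d <= x - xl /\
     forall s, 0 < s <= d -> slope w (x - s) x < lderiv xl w x + eta).
Proof.
  intros Hx.
  destruct (Glb_Rbar_real (left_slopes xl w x) (slope w xl x) (slope w x (x + 1)))
    as [Hlb Hgreatest].
  { exists (x - xl). split; [lra |]. f_equal. ring. }
  { intros z [s [Hs ->]]. apply slope_antitone; lra. }
  fold (lderiv xl w x) in Hlb, Hgreatest. split.
  - intros s Hs. apply Hlb. exists s. split; [exact Hs | reflexivity].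
  - intros eta Heta.
    destruct (classic (exists d, 0 < d <= x - xl /\ slope w (x - d) x < lderiv xl w x + eta))
      as [[d [Hd Hlt]] | Hnone].
    + exists d. split; [exact Hd |]. intros s [Hs Hsd].
      destruct (Rle_lt_or_eq_dec s d Hsd) as [Hlt' | ->]; [| exact Hlt].
      apply (Rle_lt_trans _ (slope w (x - d) x)); [apply slope_antitone_left_end; lra | exact Hlt].
    + exfalso. assert (lderiv xl w x + eta <= lderiv xl w x) by
        (apply Hgreatest; intros z [s [Hs ->]]; apply Rnot_lt_le; intros Hlt; apply Hnone; eauto).
      lra.
Qed.

Lemma rderiv_le_lderiv x : xl < x -> rderiv w x <= lderiv xl w x.
Proof.
  intros Hx.
  destruct (rderiv_spec x ltac:(lra) (right_slopes_bounded_interior x Hx)) as [_ Hright].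
  destruct (lderiv_spec x Hx) as [_ Hleft].
  apply Rnot_lt_le. intros Hlt. set (eta := (rderiv w x - lderiv xl w x) / 2).
  destruct (Hright eta ltac:(unfold eta; lra)) as [dr [Hdr Hr]].
  destruct (Hleft eta ltac:(unfold eta; lra)) as [dl [Hdl Hl]].
  specialize (Hr dr ltac:(lra)). specialize (Hl dl ltac:(lra)).
  pose proof (slope_antitone (x - dl) x x (x + dr) ltac:(lra) ltac:(lra) ltac:(lra) ltac:(lra)).
  unfold eta in *. lra.
Qed.

Lemma supergradient x0 p : xl < x0 -> rderiv w x0 <= p <= lderiv xl w x0 ->
  forall x, xl <= x -> w x - w x0 <= p * (x - x0).
Proof.
  intros Hx0 Hp x Hx.
  destruct (rderiv_spec x0 ltac:(lra) (right_slopes_bounded_interior x0 Hx0)) as [Hright _].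
  destruct (lderiv_spec x0 Hx0) as [Hleft _].
  destruct (Rtotal_order x x0) as [Hlt | [-> | Hgt]].
  - specialize (Hleft (x0 - x) ltac:(lra)). replace (x0 - (x0 - x)) with x in Hleft by ring.
    apply le_slope_iff in Hleft; [nra | exact Hlt].
  - lra.
  - specialize (Hright (x - x0) ltac:(lra)). replace (x0 + (x - x0)) with x in Hright by ring.
    apply slope_le_iff in Hright; [nra | exact Hgt].
Qed.

End Concave.

Section ConcaveC1.

Variables (xl : R) (w : R -> R).
Hypotheses (Hconc : concave_on xl w) (Hcont : cont_on xl w)
  (Hbounded_xl : right_slopes_bounded w xl)
  (Hno_kink : forall x, xl < x -> rderiv w x = lderiv xl w x).

Lemma rderiv_spec_on x : xl <= x ->
  (forall s, 0 < s -> slope w x (x + s) <= rderiv w x) /\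
  (forall eta, 0 < eta -> exists d, 0 < d /\
     forall s, 0 < s <= d -> rderiv w x - eta < slope w x (x + s)).
Proof.
  intros Hx. apply (rderiv_spec xl); [exact Hconc | exact Hx |].
  destruct (Rle_lt_or_eq_dec xl x Hx) as [Hlt | <-]; [| exact Hbounded_xl].
  apply (right_slopes_bounded_interior xl); assumption.
Qed.

Lemma rderiv_antitone x z : xl <= x <= z -> rderiv w z <= rderiv w x.
Proof.
  intros Hxz. destruct (Rle_lt_or_eq_dec x z (proj2 Hxz)) as [Hlt | <-]; [| lra].
  destruct (lderiv_spec xl w Hconc z ltac:(lra)) as [Hleft _].
  destruct (rderiv_spec_on x (proj1 Hxz)) as [Hright _].
  specialize (Hleft (z - x) ltac:(lra)). specialize (Hright (z - x) ltac:(lra)).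
  replace (z - (z - x)) with x in Hleft by ring. replace (x + (z - x)) with z in Hright by ring.
  rewrite Hno_kink by lra. lra.
Qed.

Lemma is_derive_rderiv x : xl < x -> is_derive w x (rderiv w x).
Proof.
  intros Hx. apply is_derive_Reals. intros eps Heps.
  destruct (rderiv_spec_on x ltac:(lra)) as [Hr_ub Hr_approx].
  destruct (lderiv_spec xl w Hconc x Hx) as [Hl_lb Hl_approx].
  destruct (Hr_approx eps Heps) as [dr [Hdr Hr]].
  destruct (Hl_approx eps Heps) as [dl [Hdl Hl]].
  rewrite <- Hno_kink in Hl_lb, Hl by exact Hx.
  assert (Hd : 0 < Rmin dr dl) by (apply Rmin_glb_lt; lra).
  exists (mkposreal _ Hd). intros h Hh0 Hh. simpl in Hh.
  pose proof (Rmin_l dr dl). pose proof (Rmin_r dr dl).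
  destruct (Rtotal_order h 0) as [Hneg | [Hzero | Hpos]]; [| contradiction |].
  - rewrite Rabs_left in Hh by lra.
    specialize (Hl (- h) ltac:(lra)). specialize (Hl_lb (- h) ltac:(lra)).
    replace (x - - h) with (x + h) in Hl, Hl_lb by ring.
    replace (slope w (x + h) x) with ((w (x + h) - w x) / h) in Hl, Hl_lb
      by (unfold slope; field; lra).
    apply Rabs_def1; lra.
  - rewrite Rabs_right in Hh by lra.
    specialize (Hr h ltac:(lra)). specialize (Hr_ub h ltac:(lra)).
    unfold slope in Hr, Hr_ub. replace (x + h - x) with h in Hr, Hr_ub by ring.
    apply Rabs_def1; lra.
Qed.

Lemma rderiv_right_continuous x0 : xl <= x0 -> forall eps, 0 < eps -> exists d, 0 < d /\
  forall z, x0 <= z < x0 + d -> Rabs (rderiv w z - rderiv w x0) < eps.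
Proof.
  intros Hx0 eps Heps.
  destruct (rderiv_spec_on x0 Hx0) as [_ Happrox].
  destruct (Happrox (eps / 2) ltac:(lra)) as [s [Hs Hslope]].
  specialize (Hslope s ltac:(lra)).
  destruct (proj1 (continuity_pt_eps _ x0)
              (continuity_pt_slope_ext_left_end xl w (x0 + s) x0 Hcont ltac:(lra))
              (eps / 2) ltac:(lra)) as [d [Hd Hnear]].
  exists (Rmin d s). split; [apply Rmin_glb_lt; lra |].
  intros z Hz. pose proof (Rmin_l d s). pose proof (Rmin_r d s).
  specialize (Hnear z ltac:(rewrite Rabs_right; lra)).
  rewrite !slope_ext_left in Hnear by lra. apply Rabs_def2 in Hnear.
  destruct (rderiv_spec_on z ltac:(lra)) as [Hub _].
  specialize (Hub (x0 + s - z) ltac:(lra)). replace (z + (x0 + s - z)) with (x0 + s) in Hub by ring.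
  pose proof (rderiv_antitone x0 z ltac:(lra)).
  apply Rabs_def1; lra.
Qed.

Lemma rderiv_left_continuous x0 : xl < x0 -> forall eps, 0 < eps -> exists d, 0 < d <= x0 - xl /\
  forall z, x0 - d < z <= x0 -> Rabs (rderiv w z - rderiv w x0) < eps.
Proof.
  intros Hx0 eps Heps.
  destruct (lderiv_spec xl w Hconc x0 Hx0) as [_ Happrox].
  destruct (Happrox (eps / 2) ltac:(lra)) as [s [Hs Hslope]].
  specialize (Hslope s ltac:(lra)). rewrite <- Hno_kink in Hslope by exact Hx0.
  destruct (proj1 (continuity_pt_eps _ x0)
              (continuity_pt_slope_ext_right_end xl w (x0 - s) x0 Hcont ltac:(lra))
              (eps / 2) ltac:(lra)) as [d [Hd Hnear]].
  exists (Rmin d s). split; [split; [apply Rmin_glb_lt | pose proof (Rmin_r d s)]; lra |].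
  intros z Hz. pose proof (Rmin_l d s). pose proof (Rmin_r d s).
  specialize (Hnear z ltac:(rewrite Rabs_left1; lra)).
  rewrite !slope_ext_left in Hnear by lra. apply Rabs_def2 in Hnear.
  destruct (lderiv_spec xl w Hconc z ltac:(lra)) as [Hlb _].
  specialize (Hlb (z - (x0 - s)) ltac:(lra)). replace (z - (z - (x0 - s))) with (x0 - s) in Hlb by ring.
  rewrite <- Hno_kink in Hlb by lra.
  pose proof (rderiv_antitone z x0 ltac:(lra)).
  apply Rabs_def1; lra.
Qed.

Lemma continuity_pt_rderiv_ext x : xl <= x -> continuity_pt (ext_left xl (rderiv w)) x.
Proof.
  intros Hx. apply continuity_pt_eps. intros eps Heps. rewrite (ext_left_eq _ _ x Hx).
  destruct (rderiv_right_continuous x Hx eps Heps) as [dr [Hdr Hr]].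
  destruct (Rle_lt_or_eq_dec xl x Hx) as [Hlt | <-].
  - destruct (rderiv_left_continuous x Hlt eps Heps) as [dl [Hdl Hl]].
    exists (Rmin dr dl). split; [apply Rmin_glb_lt; lra |].
    intros z Hz. pose proof (Rmin_l dr dl). pose proof (Rmin_r dr dl). apply Rabs_def2 in Hz.
    rewrite ext_left_eq by lra.
    destruct (Rle_lt_dec x z); [apply Hr | apply Hl]; lra.
  - exists dr. split; [exact Hdr |]. intros z Hz. apply Rabs_def2 in Hz.
    destruct (Rle_lt_dec xl z).
    + rewrite ext_left_eq by lra. apply Hr. lra.
    + unfold ext_left. rewrite Rmax_right by lra. rewrite Rminus_diag, Rabs_R0. exact Heps.
Qed.

Lemma concave_C1_conclusion : C1_conclusion xl w.
Proof.
  exists (rderiv w). split; [| split; [| split]].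
  - exact is_derive_rderiv.
  - intros x Hx. apply continuity_pt_filterlim.
    apply continuity_pt_locally_ext with (f := ext_left xl (rderiv w)) (a := x - xl); [lra | |].
    + intros z Hz. unfold Rdist in Hz. apply Rabs_def2 in Hz. apply ext_left_eq. lra.
    + apply continuity_pt_rderiv_ext. lra.
  - apply filterlim_locally. intros eps.
    destruct (rderiv_spec_on xl ltac:(lra)) as [Hub Happrox].
    destruct (Happrox eps (cond_pos eps)) as [d [Hd Hlow]].
    exists (mkposreal d Hd). intros e He Hpos. change R in e. change (Rabs (e - 0) < d) in He.
    rewrite Rminus_0_r, Rabs_right in He by lra.
    specialize (Hlow e ltac:(lra)). specialize (Hub e Hpos).
    unfold slope in Hlow, Hub. replace (xl + e - xl) with e in Hlow, Hub by ring.
    change (Rabs ((w (xl + e) - w xl) / e - rderiv w xl) < eps).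
    apply Rabs_def1; lra.
  - intros Rb HRb eps Heps.
    destruct (Heine (ext_left xl (rderiv w)) (fun c => xl <= c <= Rb) (compact_P3 xl Rb))
      with (eps := mkposreal eps Heps) as [delta Hdelta].
    { intros x Hx. apply continuity_pt_rderiv_ext. lra. }
    exists delta. split; [apply cond_pos |]. intros a b Ha Hb Hab.
    specialize (Hdelta a b Ha Hb Hab). simpl in Hdelta.
    rewrite !ext_left_eq in Hdelta by lra. exact Hdelta.
Qed.

End ConcaveC1.

Lemma interior_local_min (g : R -> R) (a b m0 : R) :
  (forall t, a <= t <= b -> continuity_pt g t) -> a <= m0 <= b -> g m0 < g a -> g m0 < g b ->
  exists m d, a < m < b /\ 0 < d /\ forall t, Rabs (t - m) < d -> g m <= g t.
Proof.
  intros Hg Hm0 Ha Hb.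
  destruct (continuity_ab_min g a b ltac:(lra) Hg) as [m [Hmin Hm]].
  pose proof (Hmin m0 Hm0).
  assert (Hm_in : a < m < b).
  { split; apply Rnot_le_lt; intros Hle.
    - replace m with a in * by lra. lra.
    - replace m with b in * by lra. lra. }
  exists m, (Rmin (m - a) (b - m)).
  pose proof (Rmin_l (m - a) (b - m)). pose proof (Rmin_r (m - a) (b - m)).
  split; [exact Hm_in |]. split; [apply Rmin_glb_lt; lra |].
  intros t Ht. apply Rabs_def2 in Ht. apply Hmin. lra.
Qed.

Lemma quad_touch_below (u : R -> R) (x0 A D : R) :
  (forall t, continuity_pt u t) -> 0 < D ->
  (forall s, 0 < s <= D -> slope u x0 (x0 + s) <= A) ->
  (forall eta, 0 < eta -> exists d, 0 < d /\
     forall s, 0 < s <= d -> A - eta < slope u x0 (x0 + s)) ->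
  forall c, 0 < c ->
  exists x1 b k d, x0 < x1 < x0 + D /\ 0 < d /\
    (forall t, Rabs (t - x1) < d -> u x1 - quad 0 b k x1 <= u t - quad 0 b k t) /\
    Rabs (b + 2 * k * x1 - A) < c.
Proof.
  intros Hu HD Hub Happrox c Hc.
  destruct (Happrox (c / 8) ltac:(lra)) as [d0 [Hd0 Hlow]].
  set (h := Rmin d0 (D / 2)).
  assert (Hh : 0 < h <= d0 /\ h <= D / 2) by (unfold h, Rmin; destruct Rle_dec; lra).
  set (K := c / h).
  assert (HK : K * h = c) by (unfold K; field; lra).
  assert (HKpos : 0 < K) by (unfold K; apply Rdiv_lt_0_compat; lra).
  (* Subtract the parabola of slope [A + c] at [x0] and curvature [-K]: with [K h = c]
     the minimum of the difference [g] over [[x0, x0 + h]] lies strictly inside. *)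
  set (b := A + c + 2 * K * x0).
  set (g := fun t => u t - quad 0 b (- K) t).
  assert (Hg : forall s, g (x0 + s) - g x0 = u (x0 + s) - u x0 - (A + c) * s + K * s * s)
    by (intros s; unfold g, quad, b; ring).
  assert (Hmid : g (x0 + h / 2) - g x0 <= - c * h / 4).
  { rewrite Hg. specialize (Hub (h / 2) ltac:(lra)).
    apply slope_le_iff in Hub; [| lra].
    replace (K * (h / 2) * (h / 2)) with (c * h / 4) by (rewrite <- HK; field). nra. }
  assert (Hend : - c * h / 8 <= g (x0 + h) - g x0).
  { rewrite Hg. specialize (Hlow h ltac:(lra)).
    apply lt_slope_iff in Hlow; [| lra].
    replace (K * h * h) with (c * h) by (rewrite <- HK; ring). nra. }
  destruct (interior_local_min g x0 (x0 + h) (x0 + h / 2)) as [m [d [Hm [Hd Hmin]]]];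
    [intros t _; apply continuity_pt_minus; [apply Hu | apply continuity_pt_quad] | lra | nra | nra |].
  exists m, b, (- K), d. split; [lra |]. split; [exact Hd |]. split; [exact Hmin |].
  assert (0 < K * (m - x0)) by (apply Rmult_lt_0_compat; lra).
  assert (K * (m - x0) < K * h) by (apply Rmult_lt_compat_l; lra).
  unfold b. apply Rabs_def1; nra.
Qed.

Section ViscositySolution.

Variables (rho r gamma xl y lam : R) (w wbar : R -> R).
Hypotheses (Hgamma : 1 < gamma) (Hcw : cont_on xl w) (Hcwbar : cont_on xl wbar)
  (Hconc : concave_on xl w)
  (Hsuper : visc_super_j rho r gamma xl y lam (fun x => xl < x) w wbar)
  (Hsub : visc_sub_j rho r gamma xl y lam (fun x => xl <= x) w wbar).

Definition ham_exponent : R := 1 - 1 / gamma.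

Definition ham_coef : R := gamma / (1 - gamma).

Definition coupling (x : R) : R := lam * (wbar x - w x) - rho * w x.

(* For [q >= 0], [residual x q = Ham r gamma x y q + lam (wbar x - w x) - rho w x]. *)
Definition residual (x q : R) : R :=
  (r * x + y) * q + ham_coef * powp q ham_exponent + coupling x.

Lemma ham_exponent_bounds : 0 < ham_exponent < 1.
Proof.
  unfold ham_exponent. assert (0 < 1 / gamma < 1); [| lra].
  split; [apply Rdiv_lt_0_compat; lra | apply Rlt_div_l; lra].
Qed.

Lemma ham_coef_neg : ham_coef < 0.
Proof. apply Rdiv_pos_neg; lra. Qed.

Lemma residual_midpoint_lt x A B : 0 <= A -> A < B ->
  residual x ((A + B) / 2) < (residual x A + residual x B) / 2.
Proof.
  intros HA HAB. pose proof (powp_midpoint_lt A B ham_exponent HA HAB ham_exponent_bounds).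
  pose proof ham_coef_neg. unfold residual. nra.
Qed.

Lemma residual_le0_of_touch_below x1 a b k : xl < x1 -> loc_min_rel xl w (quad a b k) x1 ->
  0 <= b + 2 * k * x1 /\ residual x1 (b + 2 * k * x1) <= 0.
Proof.
  intros Hx1 Htouch. pose proof (Hsuper _ x1 (smooth_quad a b k) Hx1 Htouch) as H.
  rewrite Derive_quad in H. unfold Ham in H.
  destruct (Rlt_dec (b + 2 * k * x1) 0); simpl in H; [contradiction |].
  unfold residual, coupling, ham_coef, ham_exponent. split; lra.
Qed.

Lemma residual_ge0_of_touch_above x0 a b k : xl <= x0 -> loc_max_rel xl w (quad a b k) x0 ->
  0 <= b + 2 * k * x0 -> 0 <= residual x0 (b + 2 * k * x0).
Proof.
  intros Hx0 Htouch Hq. pose proof (Hsub _ x0 (smooth_quad a b k) Hx0 Htouch) as H.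
  rewrite Derive_quad in H. unfold Ham in H.
  destruct (Rlt_dec (b + 2 * k * x0) 0); simpl in H; [lra |].
  unfold residual, coupling, ham_coef, ham_exponent. lra.
Qed.

Lemma residual_le0_near_rderiv x0 : xl <= x0 -> right_slopes_bounded w x0 ->
  forall c, 0 < c -> exists x1 q, x0 < x1 < x0 + c /\ Rabs (q - rderiv w x0) < c /\
    0 <= q /\ residual x1 q <= 0.
Proof.
  intros Hx0 Hbd c Hc.
  destruct (rderiv_spec xl w Hconc x0 Hx0 Hbd) as [Hub Happrox].
  destruct (quad_touch_below (ext_left xl w) x0 (rderiv w x0) c
              (continuity_pt_ext_left xl w Hcw) Hc) with (c := c)
    as [x1 [b [k [d [Hx1 [Hd [Hmin Hslope]]]]]]]; [| | exact Hc |].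
  - intros s Hs. rewrite slope_ext_left by lra. apply Hub. lra.
  - intros eta Heta. destruct (Happrox eta Heta) as [d [Hd Hlow]].
    exists d. split; [exact Hd |]. intros s Hs. rewrite slope_ext_left by lra. apply Hlow, Hs.
  - assert (Htouch : loc_min_rel xl w (quad 0 b k) x1).
    { exists d. split; [exact Hd |]. intros x Hx Hxd.
      specialize (Hmin x Hxd). rewrite !ext_left_eq in Hmin by lra. exact Hmin. }
    destruct (residual_le0_of_touch_below x1 0 b k ltac:(lra) Htouch) as [Hq Hres].
    exists x1, (b + 2 * k * x1). auto.
Qed.

Lemma residual_le0_near_lderiv x0 : xl < x0 ->
  forall c, 0 < c -> exists x1 q, x0 - c < x1 < x0 /\ xl < x1 /\
    Rabs (q - lderiv xl w x0) < c /\ 0 <= q /\ residual x1 q <= 0.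
Proof.
  intros Hx0 c Hc.
  destruct (lderiv_spec xl w Hconc x0 Hx0) as [Hlb Happrox].
  (* reflect [w] about [x0], turning left difference quotients into right ones *)
  set (u := fun t => ext_left xl w (2 * x0 - t)).
  assert (Hslope : forall s, 0 < s <= x0 - xl -> slope u x0 (x0 + s) = - slope w (x0 - s) x0).
  { intros s Hs. unfold u. rewrite slope_reflect, slope_ext_left by lra. reflexivity. }
  pose proof (Rmin_l c (x0 - xl)). pose proof (Rmin_r c (x0 - xl)).
  destruct (quad_touch_below u x0 (- lderiv xl w x0) (Rmin c (x0 - xl))) with (c := c)
    as [x1 [b [k [d [Hx1 [Hd [Hmin Hq]]]]]]]; [| apply Rmin_glb_lt; lra | | | exact Hc |].
  - intros t. apply (continuity_pt_comp (fun t => 2 * x0 - t) (ext_left xl w)).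
    + reg.
    + apply continuity_pt_ext_left, Hcw.
  - intros s Hs. rewrite Hslope by lra. specialize (Hlb s ltac:(lra)). lra.
  - intros eta Heta. destruct (Happrox eta Heta) as [d [Hd Hup]].
    exists d. split; [lra |]. intros s Hs. rewrite Hslope by lra. specialize (Hup s Hs). lra.
  - set (z1 := 2 * x0 - x1).
    set (a' := 2 * b * x0 + 4 * k * x0 * x0). set (b' := - (b + 4 * k * x0)).
    replace x1 with (2 * x0 - z1) in Hmin by (unfold z1; ring).
    assert (Htouch : loc_min_rel xl w (quad a' b' k) z1).
    { exists d. split; [exact Hd |]. intros x Hx Hxd.
      specialize (Hmin (2 * x0 - x) ltac:(rewrite <- Rabs_Ropp; replace (- (2 * x0 - x - (2 * x0 - z1))) with (x - z1) by ring; exact Hxd)).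
      unfold u in Hmin. rewrite !quad_reflect in Hmin.
      replace (2 * x0 - (2 * x0 - z1)) with z1 in Hmin by ring.
      replace (2 * x0 - (2 * x0 - x)) with x in Hmin by ring.
      rewrite !ext_left_eq in Hmin by (unfold z1; lra). exact Hmin. }
    destruct (residual_le0_of_touch_below z1 a' b' k ltac:(unfold z1; lra) Htouch) as [Hq0 Hres].
    exists z1, (b' + 2 * k * z1). repeat split; try assumption; try (unfold z1; lra).
    replace (b' + 2 * k * z1 - lderiv xl w x0) with (- (b + 2 * k * x1 - - lderiv xl w x0))
      by (unfold b', z1; ring).
    rewrite Rabs_Ropp. exact Hq.
Qed.

Lemma continuity_pt_coupling_ext t : continuity_pt (ext_left xl coupling) t.
Proof.
  change (continuity_pt (fun x => lam * (ext_left xl wbar x - ext_left xl w x)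
                                  - rho * ext_left xl w x) t).
  apply continuity_pt_minus; apply continuity_pt_scal; [apply continuity_pt_minus |];
    apply continuity_pt_ext_left; assumption.
Qed.

Lemma continuity_2d_pt_residual_ext x0 A :
  continuity_2d_pt (fun x q => (r * x + y) * q + ham_coef * powp q ham_exponent
                               + ext_left xl coupling x) x0 A.
Proof.
  apply continuity_2d_pt_plus; [apply continuity_2d_pt_plus |].
  - apply continuity_2d_pt_mult; [| apply continuity_2d_pt_id2].
    apply continuity_2d_pt_plus; [| apply continuity_2d_pt_const].
    apply continuity_2d_pt_mult; [apply continuity_2d_pt_const | apply continuity_2d_pt_id1].
  - apply continuity_2d_pt_mult; [apply continuity_2d_pt_const |].
    apply (continuity_1d_2d_pt_comp (fun q => powp q ham_exponent) (fun _ q => q)).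
    + apply continuity_pt_powp, ham_exponent_bounds.
    + apply continuity_2d_pt_id2.
  - apply (continuity_1d_2d_pt_comp (ext_left xl coupling) (fun x _ => x)).
    + apply continuity_pt_coupling_ext.
    + apply continuity_2d_pt_id1.
Qed.

Lemma residual_le0_closed x0 A : xl <= x0 ->
  (forall c, 0 < c -> exists x1 q, xl <= x1 /\ Rabs (x1 - x0) < c /\ Rabs (q - A) < c /\
     0 <= q /\ residual x1 q <= 0) ->
  0 <= A /\ residual x0 A <= 0.
Proof.
  intros Hx0 Happrox.
  assert (HA : 0 <= A).
  { apply Rnot_lt_le. intros HA.
    destruct (Happrox (- A) ltac:(lra)) as [x1 [q [_ [_ [Hq [Hq0 _]]]]]].
    apply Rabs_def2 in Hq. lra. }
  split; [exact HA |]. apply Rnot_lt_le. intros Hpos.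
  destruct (continuity_2d_pt_residual_ext x0 A (mkposreal _ Hpos)) as [d Hd].
  destruct (Happrox d (cond_pos d)) as [x1 [q [Hx1 [Hxd [Hqd [_ Hres]]]]]].
  specialize (Hd x1 q Hxd Hqd). simpl in Hd.
  rewrite !ext_left_eq in Hd by lra. apply Rabs_def2 in Hd.
  unfold residual in *. lra.
Qed.

Lemma rderiv_eq_lderiv x0 : xl < x0 -> rderiv w x0 = lderiv xl w x0.
Proof.
  intros Hx0. set (A := rderiv w x0). set (B := lderiv xl w x0).
  assert (HAB : A <= B) by apply (rderiv_le_lderiv xl w Hconc x0 Hx0).
  destruct (residual_le0_closed x0 A ltac:(lra)) as [HA HresA].
  { intros c Hc.
    destruct (residual_le0_near_rderiv x0 ltac:(lra)
                (right_slopes_bounded_interior xl w Hconc x0 Hx0) c Hc)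
      as [x1 [q [Hx1 [Hq [Hq0 Hres]]]]].
    exists x1, q. repeat split; try assumption; [lra | rewrite Rabs_right; lra]. }
  destruct (residual_le0_closed x0 B ltac:(lra)) as [_ HresB].
  { intros c Hc.
    destruct (residual_le0_near_lderiv x0 Hx0 c Hc) as [x1 [q [Hx1 [Hx1l [Hq [Hq0 Hres]]]]]].
    exists x1, q. repeat split; try assumption; [lra | rewrite Rabs_left; lra]. }
  destruct (Rle_lt_or_eq_dec A B HAB) as [Hlt | Heq]; [exfalso | exact Heq].
  set (p := (A + B) / 2).
  assert (Htouch : loc_max_rel xl w (quad (w x0 - p * x0) p 0) x0).
  { exists 1. split; [lra |]. intros x Hx _.
    pose proof (supergradient xl w Hconc x0 p Hx0 ltac:(change (A <= p <= B); unfold p; lra) x Hx).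
    unfold quad. lra. }
  pose proof (residual_ge0_of_touch_above x0 _ p 0 ltac:(lra) Htouch ltac:(unfold p; lra))
    as Hres_p.
  replace (p + 2 * 0 * x0) with p in Hres_p by ring.
  pose proof (residual_midpoint_lt x0 A B HA Hlt) as Hconvex. fold p in Hconvex. lra.
Qed.

Hypothesis Hpos : 0 < r * xl + y.

Lemma rderiv_bounded_near_xl : exists h M, 0 < h /\ forall x0, xl < x0 < xl + h -> rderiv w x0 <= M.
Proof.
  pose proof ham_exponent_bounds. pose proof ham_coef_neg.
  set (m0 := (r * xl + y) / 2).
  destruct (proj1 (continuity_pt_eps (fun x => r * x + y) xl) ltac:(reg) m0 ltac:(unfold m0; lra))
    as [d1 [Hd1 Hlin]].
  destruct (proj1 (continuity_pt_eps _ xl) (continuity_pt_coupling_ext xl) 1 ltac:(lra))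
    as [d2 [Hd2 Hcpl]].
  destruct (linear_minus_powp_sublevel_bounded m0 (- ham_coef) (1 - coupling xl) ham_exponent)
    as [Qb HQb]; [unfold m0; lra | lra | assumption |].
  set (h := Rmin d1 d2 / 2).
  assert (Hh : 0 < h /\ 2 * h <= d1 /\ 2 * h <= d2) by (unfold h, Rmin; destruct Rle_dec; lra).
  exists h, (Qb + h). split; [lra |]. intros x0 Hx0.
  destruct (residual_le0_near_rderiv x0 ltac:(lra)
              (right_slopes_bounded_interior xl w Hconc x0 ltac:(lra)) h ltac:(lra))
    as [x1 [q [Hx1 [Hq [Hq0 Hres]]]]].
  specialize (Hlin x1 ltac:(rewrite Rabs_right; lra)).
  specialize (Hcpl x1 ltac:(rewrite Rabs_right; lra)).
  rewrite !ext_left_eq in Hcpl by lra.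
  apply Rabs_def2 in Hlin, Hcpl, Hq.
  assert (q <= Qb); [| lra].
  apply HQb; [exact Hq0 |]. unfold residual in Hres. unfold m0 in *. nra.
Qed.

Lemma right_slopes_bounded_xl : right_slopes_bounded w xl.
Proof.
  destruct rderiv_bounded_near_xl as [h [M [Hh Hnear]]].
  assert (Hsmall : forall s, 0 < s < h -> slope w xl (xl + s) <= M).
  { intros s Hs. rewrite <- (slope_ext_left xl) by lra.
    apply (continuity_pt_le_right_end (fun z => slope (ext_left xl w) z (xl + s)) xl s M).
    - apply continuity_pt_slope_ext_left_end; [exact Hcw | lra].
    - lra.
    - intros t Ht. cbv beta. rewrite slope_ext_left by lra.
      destruct (rderiv_spec xl w Hconc t ltac:(lra)
                  (right_slopes_bounded_interior xl w Hconc t ltac:(lra))) as [Hub _].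
      specialize (Hub (xl + s - t) ltac:(lra)).
      replace (t + (xl + s - t)) with (xl + s) in Hub by ring.
      specialize (Hnear t ltac:(lra)). lra. }
  exists M. intros s Hs. destruct (Rlt_le_dec s h) as [Hlt | Hge]; [apply Hsmall; lra |].
  apply (Rle_trans _ (slope w xl (xl + h / 2))); [| apply Hsmall; lra].
  apply (slope_antitone_right_end xl w Hconc); lra.
Qed.

End ViscositySolution.

Lemma viscosity_component_C1 rho r gamma xl y lam (w wbar : R -> R) :
  1 < gamma -> 0 < r * xl + y -> cont_on xl w -> cont_on xl wbar -> concave_on xl w ->
  visc_super_j rho r gamma xl y lam (fun x => xl < x) w wbar ->
  visc_sub_j rho r gamma xl y lam (fun x => xl <= x) w wbar ->
  C1_conclusion xl w.
Proof.
  intros Hgamma Hpos Hcw Hcwbar Hconc Hsuper Hsub.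
  apply concave_C1_conclusion; [exact Hconc | exact Hcw | |].
  - eapply right_slopes_bounded_xl; eassumption.
  - intros x Hx. eapply rderiv_eq_lderiv; eassumption.
Qed.

Theorem mainTheorem8
  (rho r gamma y1 y2 xl lam1 lam2 : R) (v1 v2 : R -> R)
  (Hrho : 0 < rho) (Hr : r < rho) (Hy1 : 0 < y1) (Hy12 : y1 < y2)
  (Hgamma : 1 < gamma) (Hxl : xl <= 0)
  (Hxy1 : 0 < rho * xl + y1) (Hxy2 : 0 < rho * xl + y2)
  (Hlam1 : 0 <= lam1) (Hlam2 : 0 <= lam2)
  (Hsol : constrained_visc_sol rho r gamma xl y1 y2 lam1 lam2 v1 v2)
  (Hb1 : bounded_on xl v1) (Hb2 : bounded_on xl v2)
  (Hc1 : concave_on xl v1) (Hc2 : concave_on xl v2) :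
  C1_conclusion xl v1 /\ C1_conclusion xl v2.
Proof.
  destruct Hsol as [Hcv1 [Hcv2 [[_ [_ [Hsuper1 Hsuper2]]] [_ [_ [Hsub1 Hsub2]]]]]].
  assert (Hrx : rho * xl <= r * xl) by nra.
  split.
  - apply (viscosity_component_C1 rho r gamma xl y1 lam1 v1 v2); auto; lra.
  - apply (viscosity_component_C1 rho r gamma xl y2 lam2 v2 v1); auto; lra.
Qed.
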